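(* Let $n\ge3$, let $U\subseteq\mathbb{R}^n$ be a convex open set, and for $1\le i,j\le n$ let $g_{ij}:\mathbb{R}\to\mathbb{R}$ be continuously differentiable functions with $g_{ij}=g_{ji}$, such that for all $x\in U$: $g_{ij}'(x_i+x_j)\ge\ell$ for all $i\ne j$ (for some fixed $\ell>0$) and $g_{ii}'(2x_i)\ge0$ for all $i$. Define $F:U\to\mathbb{R}^n$ by $F(x)=(F_1(x),\dots,F_n(x))$ with $F_i(x)=\sum_{j=1}^n g_{ij}(x_i+x_j)$. Then $F$ is injective on $U$, and for all $d,\hat d\in F(U)$, $$|F^{-1}(d)-F^{-1}(\hat d)|_\infty\le\frac{3n-4}{2\ell(n-1)(n-2)}\,|d-\hat d|_\infty.$$
   Context: $|v|_\infty=\max_i|v_i|$ is the maximum norm on $\mathbb{R}^n$. *)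

(* classical reals. Points of R^n are encoded as functions
   nat -> R vanishing at indices >= n (coordinates 1..n of the paper are
   indices 0..n-1 here). *)
From Stdlib Require Import Reals Lra Lia.
Open Scope R_scope.

Definition inRn (n : nat) (x : nat -> R) : Prop :=
  forall i : nat, (n <= i)%nat -> x i = 0.

Fixpoint ninf (n : nat) (v : nat -> R) : R :=
  match n with
  | O => 0
  | S k => Rmax (ninf k v) (Rabs (v k))
  end.

Definition vsub (x y : nat -> R) : nat -> R := fun i => x i - y i.

Definition subset_Rn (n : nat) (U : (nat -> R) -> Prop) : Prop :=
  forall x, U x -> inRn n x.

Definition convex_set (U : (nat -> R) -> Prop) : Prop :=
  forall x y t, U x -> U y -> 0 <= t <= 1 ->
    U (fun i => t * x i + (1 - t) * y i).

(* open in R^n (w.r.t. the max norm, equivalent to the Euclidean topology) *)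
Definition open_in_Rn (n : nat) (U : (nat -> R) -> Prop) : Prop :=
  forall x, U x -> exists eps, 0 < eps /\
    forall y, inRn n y -> ninf n (vsub y x) < eps -> U y.

(* F_i(x) = sum_{j=1}^n g_ij(x_i + x_j)  (sum_f_R0 f m = f 0 + ... + f m) *)
Definition Fmap (n : nat) (g : nat -> nat -> R -> R) (x : nat -> R) : nat -> R :=
  fun i => if Nat.ltb i n then sum_f_R0 (fun j => g i j (x i + x j)) (pred n) else 0.

(* By the mean value theorem along the segment [y, x] (which lies in U
   by convexity), d = F(x) - F(y) and v = x - y satisfy the linear system
   d_i = sum_j c_ij (v_i + v_j) with c symmetric, c_ij >= l (i <> j) and
   c_ii >= 0.  Let v_p = max_j |v_j| (up to a sign change), D = |d|_inf,
   S = sum v_j, A = sum |v_j|, Q = sum v_j^2.  Row p of the system gives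
   l((n-2) v_p + S) <= D; pairing the system with v and symmetrizing gives
   l((n-2) Q + S^2) <= sum_i v_i d_i <= D A; Cauchy-Schwarz bounds
   (A - v_p)^2 <= (n-1)(Q - v_p^2); and A + S >= 2 v_p.  An elementary
   quadratic argument turns these four facts into 2(n-1)(n-2) l v_p <= (3n-4) D. *)

From Stdlib Require Import Reals Lra Lia Psatz FunctionalExtensionality.
Open Scope R_scope.

Lemma sum_nonneg (f : nat -> R) (N : nat) :
  (forall j, (j <= N)%nat -> 0 <= f j) -> 0 <= sum_f_R0 f N.
Proof.
  intros hf. replace 0 with (sum_f_R0 (fun _ => 0) N) by (rewrite sum_cte; ring).
  apply sum_Rle. exact hf.
Qed.

Lemma sum_ge_term (f : nat -> R) (N p : nat) :
  (p <= N)%nat -> (forall j, (j <= N)%nat -> j <> p -> 0 <= f j) ->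
  f p <= sum_f_R0 f N.
Proof.
  induction N as [|N IH]; intros hp hf.
  - replace p with 0%nat by lia. simpl. lra.
  - rewrite tech5. destruct (Nat.eq_dec p (S N)) as [->|ne].
    + assert (0 <= sum_f_R0 f N) by (apply sum_nonneg; intros j hj; apply hf; lia).
      lra.
    + assert (f p <= sum_f_R0 f N) by (apply IH; [lia | intros; apply hf; lia]).
      assert (0 <= f (S N)) by (apply hf; lia).
      lra.
Qed.

Lemma sum_swap (f : nat -> nat -> R) (N M : nat) :
  sum_f_R0 (fun i => sum_f_R0 (fun j => f i j) M) N =
  sum_f_R0 (fun j => sum_f_R0 (fun i => f i j) N) M.
Proof.
  induction N as [|N IH]; simpl; [reflexivity|].
  rewrite IH, <- plus_sum. reflexivity.
Qed.

Lemma sum_shifted_squares (v : nat -> R) (a : R) (N : nat) :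
  sum_f_R0 (fun j => (a + v j) * (a + v j)) N =
  INR (S N) * (a * a) + 2 * a * sum_f_R0 v N + sum_f_R0 (fun j => v j * v j) N.
Proof.
  rewrite (sum_eq _ (fun j => (a * a + v j * (2 * a)) + v j * v j))
    by (intros; ring).
  rewrite !plus_sum, sum_cte, <- scal_sum. ring.
Qed.

Lemma weighted_sum_ge (w f : nat -> R) (l : R) (N i : nat) :
  (i <= N)%nat ->
  (forall j, (j <= N)%nat -> j <> i -> l <= w j) -> 0 <= w i ->
  (forall j, (j <= N)%nat -> 0 <= f j) ->
  l * (sum_f_R0 f N - f i) <= sum_f_R0 (fun j => w j * f j) N.
Proof.
  intros hi hoff hdiag hf.
  assert (hexcess : (w i - l) * f i <= sum_f_R0 (fun j => (w j - l) * f j) N).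
  { apply (sum_ge_term (fun j => (w j - l) * f j)); [exact hi|].
    intros j hj hji. apply Rmult_le_pos; [|apply hf; exact hj].
    pose proof (hoff j hj hji). lra. }
  assert (hsplit : sum_f_R0 (fun j => w j * f j) N =
                   sum_f_R0 (fun j => (w j - l) * f j) N + l * sum_f_R0 f N).
  { rewrite scal_sum, <- plus_sum. apply sum_eq. intros; ring. }
  assert (0 <= w i * f i) by (apply Rmult_le_pos; [exact hdiag | apply hf; exact hi]).
  lra.
Qed.

Lemma cauchy_schwarz_off (v : nat -> R) (N p : nat) :
  (p <= N)%nat ->
  let A := sum_f_R0 (fun j => Rabs (v j)) N in
  let Q := sum_f_R0 (fun j => v j * v j) N in
  (A - Rabs (v p)) * (A - Rabs (v p)) <= INR N * (Q - v p * v p).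
Proof.
  intros hp A Q.
  destruct N as [|N].
  - replace p with 0%nat by lia. unfold A. simpl. nra.
  - set (m := Rabs (v p)). set (k := INR (S N)).
    assert (hsq : forall x, Rabs x * Rabs x = x * x)
      by (intros x; rewrite <- Rabs_mult; apply Rabs_pos_eq; nra).
    (* the spread of the |v_j| around any centre c dominates that of the p-th one *)
    assert (hspread : forall c, (m - c) * (m - c) <= Q - 2 * c * A + (k + 1) * (c * c)).
    { intros c.
      replace (Q - 2 * c * A + (k + 1) * (c * c))
        with (sum_f_R0 (fun j => (- c + Rabs (v j)) * (- c + Rabs (v j))) (S N)).
      - replace ((m - c) * (m - c)) with ((- c + Rabs (v p)) * (- c + Rabs (v p)))
          by (unfold m; ring).
        apply (sum_ge_term (fun j => (- c + Rabs (v j)) * (- c + Rabs (v j)))); [exact hp|].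
        intros j _ _. apply Rle_0_sqr.
      - rewrite sum_shifted_squares, (S_INR (S N)). unfold Q, A, k.
        rewrite (sum_eq (fun j => Rabs (v j) * Rabs (v j)) (fun j => v j * v j))
          by (intros; apply hsq).
        ring. }
    assert (hk : 0 < k) by (apply lt_0_INR; lia).
    (* centre the spread at the mean c of the off-p absolute values *)
    set (c := (A - m) / k).
    assert (hA : A = m + k * c) by (unfold c; field; lra).
    pose proof (hspread c) as h.
    assert (hm : m * m = v p * v p) by apply hsq.
    rewrite <- hm, hA. rewrite hA in h. nra.
Qed.

Lemma sum_abs_plus_ge (v : nat -> R) (N p : nat) :
  (p <= N)%nat ->
  Rabs (v p) + v p <= sum_f_R0 (fun j => Rabs (v j)) N + sum_f_R0 v N.
Proof.
  intros hp. rewrite <- plus_sum.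
  apply (sum_ge_term (fun j => Rabs (v j) + v j)); [exact hp|].
  intros j _ _. pose proof (Rle_abs (- v j)) as h. rewrite Rabs_Ropp in h. lra.
Qed.

Lemma sum_pairing_le (v d : nat -> R) (D : R) (N : nat) :
  (forall i, (i <= N)%nat -> Rabs (d i) <= D) ->
  sum_f_R0 (fun i => v i * d i) N <= D * sum_f_R0 (fun i => Rabs (v i)) N.
Proof.
  intros hD. rewrite scal_sum. apply sum_Rle. intros i hi.
  pose proof (Rle_abs (v i * d i)) as h. rewrite Rabs_mult in h.
  pose proof (Rabs_pos (v i)).
  assert (Rabs (v i) * Rabs (d i) <= Rabs (v i) * D)
    by (apply Rmult_le_compat_l; [lra | apply hD; exact hi]).
  lra.
Qed.

(* The arithmetic heart of the estimate, with a = n-1 and b = n-2.  The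
   reals m, s, x, q stand for (scaled) max coordinate, minus the sum of the
   other coordinates, the sum of their absolute values, and the sum of their
   squares; the hypotheses are the row estimate, |sum| <= sum |.|,
   Cauchy-Schwarz, and the energy estimate.  If 2abm > (2a+b)D, then both
   quadratic expressions below are increasing on the relevant ranges, so the
   energy estimate forces a product of two positive factors to be <= 0. *)
Lemma quadratic_core (a b D m s x q : R) :
  a = b + 1 -> 0 < b -> 0 <= D ->
  a * m - s <= D -> s <= x -> x * x <= a * q ->
  b * (m * m + q) + (m - s) * (m - s) <= D * (m + x) ->
  2 * a * b * m <= (2 * a + b) * D.
Proof.
  intros hab hb hD hrow hsx hcs hen.
  destruct (Rle_or_lt (2 * a * b * m) ((2 * a + b) * D)) as [h|h]; [exact h|exfalso].
  set (t := a * m - D).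
  assert (ht : a * D < 2 * b * t) by (unfold t; nra).
  assert (hst : t <= s) by (unfold t; lra).
  (* energy estimate with the Cauchy-Schwarz bound q >= x^2/a inserted *)
  assert (hE : a * b * (m * m) + b * (x * x) + a * ((m - s) * (m - s)) <= a * D * (m + x)).
  { assert (b * (x * x) <= b * (a * q)) by (apply Rmult_le_compat_l; lra).
    assert (a * (b * (m * m + q) + (m - s) * (m - s)) <= a * (D * (m + x)))
      by (apply Rmult_le_compat_l; lra).
    nra. }
  (* x |-> b x^2 - a D x is increasing for x >= s >= t > aD/(2b) *)
  assert (hx : b * (s * s) - a * D * s <= b * (x * x) - a * D * x).
  { assert (0 <= (x - s) * (b * (x + s) - a * D)) by (apply Rmult_le_pos; nra).
    assert (b * (x * x) - a * D * x - (b * (s * s) - a * D * s)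
            = (x - s) * (b * (x + s) - a * D)) by ring.
    lra. }
  (* s |-> b s^2 - a D s + a (m-s)^2 is increasing for s >= t *)
  assert (hs : b * (t * t) - a * D * t + a * ((m - t) * (m - t)) <=
               b * (s * s) - a * D * s + a * ((m - s) * (m - s))).
  { assert (0 <= (a + b) * (s + t) - a * D - 2 * a * m) by (unfold t in *; nra).
    assert (0 <= (s - t) * ((a + b) * (s + t) - a * D - 2 * a * m))
      by (apply Rmult_le_pos; lra).
    assert (b * (s * s) - a * D * s + a * ((m - s) * (m - s))
            - (b * (t * t) - a * D * t + a * ((m - t) * (m - t)))
            = (s - t) * ((a + b) * (s + t) - a * D - 2 * a * m)) by ring.
    lra. }
  assert (hfactor : a * b * (m * m) + b * (t * t) + a * ((m - t) * (m - t)) - a * D * (m + t)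
                    = (2 * a * b * m - (2 * a + b) * D) * t)
    by (unfold t; rewrite hab; ring).
  assert (0 < t) by nra.
  nra.
Qed.

Lemma symmetric_energy (c : nat -> nat -> R) (v : nat -> R) (N : nat) :
  (forall i j, (i <= N)%nat -> (j <= N)%nat -> c i j = c j i) ->
  2 * sum_f_R0 (fun i => v i * sum_f_R0 (fun j => c i j * (v i + v j)) N) N =
  sum_f_R0 (fun i => sum_f_R0 (fun j => c i j * ((v i + v j) * (v i + v j))) N) N.
Proof.
  intros hsym.
  assert (hrow : sum_f_R0 (fun i => v i * sum_f_R0 (fun j => c i j * (v i + v j)) N) N =
                 sum_f_R0 (fun i => sum_f_R0 (fun j => c i j * v i * (v i + v j)) N) N).
  { apply sum_eq. intros i _. rewrite scal_sum. apply sum_eq. intros; ring. }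
  assert (hcol : sum_f_R0 (fun i => v i * sum_f_R0 (fun j => c i j * (v i + v j)) N) N =
                 sum_f_R0 (fun i => sum_f_R0 (fun j => c i j * v j * (v i + v j)) N) N).
  { rewrite hrow, sum_swap. apply sum_eq. intros i hi. apply sum_eq. intros j hj.
    rewrite (hsym j i hj hi). ring. }
  replace (2 * _) with (sum_f_R0 (fun i => v i * sum_f_R0 (fun j => c i j * (v i + v j)) N) N
                      + sum_f_R0 (fun i => v i * sum_f_R0 (fun j => c i j * (v i + v j)) N) N)
    by ring.
  rewrite hrow at 1. rewrite hcol, <- plus_sum.
  apply sum_eq. intros i _. rewrite <- plus_sum. apply sum_eq. intros; ring.
Qed.

(* The linear system d_i = sum_j c_ij (v_i + v_j), i = 0..N (n = N+1
   unknowns), with a symmetric coefficient matrix whose off-diagonal entries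
   are >= l and whose diagonal entries are >= 0. *)
Section LinearSystem.
Variables (N : nat) (c : nat -> nat -> R) (v d : nat -> R) (l : R).
Hypothesis hsym : forall i j, (i <= N)%nat -> (j <= N)%nat -> c i j = c j i.
Hypothesis hoff : forall i j, (i <= N)%nat -> (j <= N)%nat -> i <> j -> l <= c i j.
Hypothesis hdiag : forall i, (i <= N)%nat -> 0 <= c i i.
Hypothesis hsys : forall i, (i <= N)%nat -> d i = sum_f_R0 (fun j => c i j * (v i + v j)) N.

(* Row estimate: if v_p = max_j |v_j|, every summand c_pj (v_p + v_j) is
   nonnegative, and dropping the diagonal one gives
   d_p >= l ((n-2) v_p + sum_j v_j). *)
Lemma row_estimate (p : nat) :
  (p <= N)%nat -> (forall j, (j <= N)%nat -> Rabs (v j) <= v p) ->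
  l * ((INR (S N) - 2) * v p + sum_f_R0 v N) <= d p.
Proof.
  intros hp hmax.
  assert (hpos : forall j, (j <= N)%nat -> 0 <= v p + v j).
  { intros j hj. pose proof (hmax j hj). pose proof (Rle_abs (- v j)) as h.
    rewrite Rabs_Ropp in h. lra. }
  pose proof (weighted_sum_ge (c p) (fun j => v p + v j) l N p hp
                (fun j hj hjp => hoff p j hp hj (not_eq_sym hjp)) (hdiag p hp) hpos) as h.
  rewrite hsys by exact hp.
  rewrite plus_sum, sum_cte in h.
  replace ((INR (S N) - 2) * v p + sum_f_R0 v N)
    with (v p * INR (S N) + sum_f_R0 v N - (v p + v p)) by ring.
  exact h.
Qed.

(* Energy estimate: the quadratic form sum_ij c_ij (v_i + v_j)^2 is at least
   l times its off-diagonal part, which evaluates to 2((n-2) sum v_j^2 + (sum v_j)^2). *)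
Lemma energy_estimate :
  l * ((INR (S N) - 2) * sum_f_R0 (fun j => v j * v j) N + sum_f_R0 v N * sum_f_R0 v N)
  <= sum_f_R0 (fun i => v i * d i) N.
Proof.
  set (Sv := sum_f_R0 v N). set (Q := sum_f_R0 (fun j => v j * v j) N).
  assert (hrow : forall i, (i <= N)%nat ->
    l * ((INR (S N) - 4) * (v i * v i) + 2 * Sv * v i + Q)
    <= sum_f_R0 (fun j => c i j * ((v i + v j) * (v i + v j))) N).
  { intros i hi.
    pose proof (weighted_sum_ge (c i) (fun j => (v i + v j) * (v i + v j)) l N i hi
                  (fun j hj hji => hoff i j hi hj (not_eq_sym hji)) (hdiag i hi)
                  (fun j _ => Rle_0_sqr (v i + v j))) as h.
    rewrite sum_shifted_squares in h. fold Sv Q in h.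
    replace ((INR (S N) - 4) * (v i * v i) + 2 * Sv * v i + Q)
      with (INR (S N) * (v i * v i) + 2 * v i * Sv + Q - (v i + v i) * (v i + v i)) by ring.
    exact h. }
  pose proof (sum_Rle _ _ N hrow) as h.
  rewrite <- symmetric_energy in h by exact hsym.
  rewrite (sum_eq (fun i => v i * d i)
                  (fun i => v i * sum_f_R0 (fun j => c i j * (v i + v j)) N))
    by (intros i hi; rewrite hsys by exact hi; reflexivity).
  assert (hsum : sum_f_R0 (fun i => l * ((INR (S N) - 4) * (v i * v i) + 2 * Sv * v i + Q)) N
                 = 2 * (l * ((INR (S N) - 2) * Q + Sv * Sv))).
  { rewrite (sum_eq _ (fun i => (v i * v i) * (l * (INR (S N) - 4)) + v i * (2 * l * Sv) + l * Q))
      by (intros; ring).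
    rewrite !plus_sum, <- !scal_sum, sum_cte. fold Sv Q. ring. }
  lra.
Qed.

Hypothesis hl : 0 < l.

(* If v_p = max_j |v_j| and |d_i| <= D for all i, then
   2 (n-1)(n-2) l v_p <= (3n-4) D: the row, energy, Cauchy-Schwarz and
   |sum| <= sum |.| estimates, scaled by l, feed the quadratic core. *)
Lemma max_coordinate_bound (p : nat) (D : R) :
  (2 <= N)%nat -> (p <= N)%nat ->
  (forall j, (j <= N)%nat -> Rabs (v j) <= v p) ->
  (forall i, (i <= N)%nat -> Rabs (d i) <= D) ->
  2 * (INR (S N) - 1) * (INR (S N) - 2) * (l * v p) <= (3 * INR (S N) - 4) * D.
Proof.
  intros hN hp hmax hD.
  set (Sv := sum_f_R0 v N). set (A := sum_f_R0 (fun j => Rabs (v j)) N).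
  set (Q := sum_f_R0 (fun j => v j * v j) N).
  assert (hN2 : 2 <= INR N) by (apply le_INR in hN; simpl in hN; lra).
  assert (hvp : Rabs (v p) = v p) by (apply Rle_antisym; [apply hmax, hp | apply Rle_abs]).
  assert (hdp : d p <= D) by (eapply Rle_trans; [apply Rle_abs | apply hD, hp]).
  assert (hD0 : 0 <= D) by (eapply Rle_trans; [apply Rabs_pos | apply (hD p hp)]).
  pose proof (row_estimate p hp hmax) as hrow.
  pose proof energy_estimate as hen.
  pose proof (sum_pairing_le v d D N hD) as hpair.
  pose proof (sum_abs_plus_ge v N p hp) as habs.
  pose proof (cauchy_schwarz_off v N p hp) as hcs. simpl in hcs.
  fold Sv A Q in hrow, hen, hpair, habs, hcs. rewrite hvp in habs, hcs.
  rewrite S_INR in *.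
  replace (3 * (INR N + 1) - 4) with (2 * INR N + (INR N - 1)) by ring.
  replace (INR N + 1 - 1) with (INR N) by ring.
  replace (INR N + 1 - 2) with (INR N - 1) in * by ring.
  apply (quadratic_core (INR N) (INR N - 1) D (l * v p) (l * (v p - Sv))
           (l * (A - v p)) (l * l * (Q - v p * v p))).
  - ring.
  - lra.
  - exact hD0.
  - nra.
  - apply Rmult_le_compat_l; lra.
  - replace (l * (A - v p) * (l * (A - v p))) with ((l * l) * ((A - v p) * (A - v p))) by ring.
    replace (INR N * (l * l * (Q - v p * v p))) with ((l * l) * (INR N * (Q - v p * v p))) by ring.
    apply Rmult_le_compat_l; nra.
  - replace ((INR N - 1) * (l * v p * (l * v p) + l * l * (Q - v p * v p)) +
             (l * v p - l * (v p - Sv)) * (l * v p - l * (v p - Sv)))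
      with (l * (l * ((INR N - 1) * Q + Sv * Sv))) by ring.
    replace (D * (l * v p + l * (A - v p))) with (l * (D * A)) by ring.
    apply Rmult_le_compat_l; lra.
Qed.
End LinearSystem.

(* The same bound for the largest coordinate in absolute value, whatever its
   sign: the system is linear, so v and d may be replaced by -v and -d. *)
Lemma linear_system_bound (N : nat) (c : nat -> nat -> R) (v d : nat -> R) (l D : R) (p : nat) :
  (2 <= N)%nat -> 0 < l -> (p <= N)%nat ->
  (forall i j, (i <= N)%nat -> (j <= N)%nat -> c i j = c j i) ->
  (forall i j, (i <= N)%nat -> (j <= N)%nat -> i <> j -> l <= c i j) ->
  (forall i, (i <= N)%nat -> 0 <= c i i) ->
  (forall i, (i <= N)%nat -> d i = sum_f_R0 (fun j => c i j * (v i + v j)) N) ->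
  (forall i, (i <= N)%nat -> Rabs (d i) <= D) ->
  (forall j, (j <= N)%nat -> Rabs (v j) <= Rabs (v p)) ->
  2 * (INR (S N) - 1) * (INR (S N) - 2) * (l * Rabs (v p)) <= (3 * INR (S N) - 4) * D.
Proof.
  intros hN hl hp hsym hoff hdiag hsys hD hmax.
  destruct (Rle_or_lt 0 (v p)) as [hpos|hneg].
  - rewrite Rabs_pos_eq in * by exact hpos.
    apply (max_coordinate_bound N c v d l); assumption.
  - rewrite (Rabs_left _ hneg) in *.
    apply (max_coordinate_bound N c (fun i => - v i) (fun i => - d i) l); try assumption.
    + intros i hi. rewrite hsys by exact hi.
      rewrite <- (Rmult_1_l (sum_f_R0 _ N)), Ropp_mult_distr_l, scal_sum.
      apply sum_eq. intros; ring.
    + intros j hj. rewrite Rabs_Ropp. apply hmax, hj.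
    + intros i hi. rewrite Rabs_Ropp. apply hD, hi.
Qed.

Lemma ninf_ge (n : nat) (v : nat -> R) (i : nat) :
  (i < n)%nat -> Rabs (v i) <= ninf n v.
Proof.
  induction n as [|k IH]; intros hi; [lia|]. simpl.
  destruct (Nat.eq_dec i k) as [->|ne].
  - apply Rmax_r.
  - eapply Rle_trans; [apply IH; lia | apply Rmax_l].
Qed.

Lemma ninf_attained (n : nat) (v : nat -> R) :
  (1 <= n)%nat -> exists p, (p < n)%nat /\ ninf n v = Rabs (v p).
Proof.
  induction n as [|k IH]; intros hn; [lia|].
  destruct k as [|k].
  - exists 0%nat. split; [lia|]. simpl. apply Rmax_right, Rabs_pos.
  - destruct IH as [p [hp he]]; [lia|].
    change (ninf (S (S k)) v) with (Rmax (ninf (S k) v) (Rabs (v (S k)))).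
    destruct (Rle_dec (ninf (S k) v) (Rabs (v (S k)))) as [h|h].
    + exists (S k). split; [lia|]. apply Rmax_right, h.
    + exists p. split; [lia|]. rewrite Rmax_left by lra. exact he.
Qed.

Lemma ninf_zero (n : nat) (v : nat -> R) :
  (forall i, (i < n)%nat -> v i = 0) -> ninf n v = 0.
Proof.
  induction n as [|k IH]; intros h; simpl; [reflexivity|].
  rewrite IH by (intros; apply h; lia). rewrite h by lia.
  rewrite Rabs_R0. apply Rmax_left. lra.
Qed.

Definition secant (h : R -> R) (dflt u v : R) : R :=
  if Req_dec_T u v then dflt else (h u - h v) / (u - v).

Lemma secant_spec (h : R -> R) (dflt u v : R) :
  h u - h v = secant h dflt u v * (u - v).
Proof.
  unfold secant. destruct (Req_dec_T u v) as [->|ne]; [ring | field; lra].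
Qed.

Lemma segment_parameter (u v z : R) :
  (u < z < v) \/ (v < z < u) -> 0 <= (z - v) / (u - v) <= 1.
Proof.
  intros hz.
  assert (ht : (z - v) / (u - v) * (u - v) = z - v) by (field; lra).
  destruct hz; split; nra.
Qed.

Lemma secant_ge (h h' : R -> R) (k dflt u v : R) :
  (forall t, derivable_pt_lim h t (h' t)) -> k <= dflt ->
  (forall t, 0 <= t <= 1 -> k <= h' (t * u + (1 - t) * v)) ->
  k <= secant h dflt u v.
Proof.
  intros hder hdflt hk. unfold secant.
  destruct (Req_dec_T u v) as [_|ne]; [exact hdflt|].
  assert (hmvt : exists z, h u - h v = h' z * (u - v) /\ ((u < z < v) \/ (v < z < u))).
  { destruct (Rlt_or_le u v) as [lt|le].
    - destruct (MVT_cor2 h h' u v lt (fun z _ => hder z)) as [z [e hz]].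
      exists z. split; [lra | left; exact hz].
    - destruct (MVT_cor2 h h' v u ltac:(lra) (fun z _ => hder z)) as [z [e hz]].
      exists z. split; [lra | right; exact hz]. }
  destruct hmvt as [z [hz hbetween]].
  pose proof (hk _ (segment_parameter u v z hbetween)) as hkz.
  replace ((z - v) / (u - v) * u + (1 - (z - v) / (u - v)) * v) with z in hkz
    by (field; lra).
  replace ((h u - h v) / (u - v)) with (h' z) by (rewrite hz; field; lra).
  exact hkz.
Qed.

Section Setting.
Variables (n : nat) (U : (nat -> R) -> Prop) (g g' : nat -> nat -> R -> R) (l : R).
Hypothesis hn : (3 <= n)%nat.
Hypothesis hUconv : convex_set U.
Hypothesis hgder : forall i j, (i < n)%nat -> (j < n)%nat ->
  forall t, derivable_pt_lim (g i j) t (g' i j t).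
Hypothesis hgsym : forall i j, (i < n)%nat -> (j < n)%nat -> g i j = g j i.
Hypothesis hl : 0 < l.
Hypothesis hoff : forall x, U x -> forall i j, (i < n)%nat -> (j < n)%nat -> i <> j ->
  l <= g' i j (x i + x j).
Hypothesis hdiag : forall x, U x -> forall i, (i < n)%nat -> 0 <= g' i i (2 * x i).

Definition secant_matrix (x y : nat -> R) (i j : nat) : R :=
  secant (g i j) l (x i + x j) (y i + y j).

Lemma Fmap_difference (x y : nat -> R) (i : nat) : (i < n)%nat ->
  vsub (Fmap n g x) (Fmap n g y) i =
  sum_f_R0 (fun j => secant_matrix x y i j * (vsub x y i + vsub x y j)) (pred n).
Proof.
  intros hi. unfold vsub, Fmap.
  replace (Nat.ltb i n) with true by (symmetry; apply Nat.ltb_lt, hi).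
  rewrite <- minus_sum. apply sum_eq. intros j _.
  rewrite secant_spec with (dflt := l). unfold secant_matrix. ring.
Qed.

Lemma secant_matrix_sym (x y : nat -> R) (i j : nat) : (i < n)%nat -> (j < n)%nat ->
  secant_matrix x y i j = secant_matrix x y j i.
Proof.
  intros hi hj. unfold secant_matrix.
  rewrite (hgsym i j hi hj), (Rplus_comm (x j)), (Rplus_comm (y j)). reflexivity.
Qed.

(* By convexity of U, the segment between x and y stays in U, where the
   derivative bounds hold; the mean value theorem transfers them to c_ij. *)
Lemma secant_matrix_off (x y : nat -> R) (i j : nat) : U x -> U y ->
  (i < n)%nat -> (j < n)%nat -> i <> j -> l <= secant_matrix x y i j.
Proof.
  intros Ux Uy hi hj hij. apply secant_ge with (h' := g' i j); [apply hgder; assumption | lra |].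
  intros t ht.
  pose proof (hoff _ (hUconv x y t Ux Uy ht) i j hi hj hij) as h.
  replace (t * (x i + x j) + (1 - t) * (y i + y j))
    with (t * x i + (1 - t) * y i + (t * x j + (1 - t) * y j)) by ring.
  exact h.
Qed.

Lemma secant_matrix_diag (x y : nat -> R) (i : nat) : U x -> U y ->
  (i < n)%nat -> 0 <= secant_matrix x y i i.
Proof.
  intros Ux Uy hi. apply secant_ge with (h' := g' i i); [apply hgder; assumption | lra |].
  intros t ht.
  pose proof (hdiag _ (hUconv x y t Ux Uy ht) i hi) as h.
  replace (t * (x i + x i) + (1 - t) * (y i + y i))
    with (2 * (t * x i + (1 - t) * y i)) by ring.
  exact h.
Qed.

(* The Lipschitz estimate: apply the linear-system bound to v = x - y at a
   coordinate p where |x - y|_inf is attained, then divide. *)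
Lemma lipschitz_bound (x y : nat -> R) : U x -> U y ->
  ninf n (vsub x y) <=
  (3 * INR n - 4) / (2 * l * (INR n - 1) * (INR n - 2)) *
  ninf n (vsub (Fmap n g x) (Fmap n g y)).
Proof.
  intros Ux Uy.
  assert (hn3 : 3 <= INR n) by (apply le_INR in hn; simpl in hn; lra).
  assert (hden : 0 < 2 * l * (INR n - 1) * (INR n - 2)).
  { apply Rmult_lt_0_compat; [apply Rmult_lt_0_compat|]; lra. }
  destruct (ninf_attained n (vsub x y)) as [p [hp hmax]]; [lia|].
  assert (hbound := linear_system_bound (pred n) (secant_matrix x y) (vsub x y)
    (vsub (Fmap n g x) (Fmap n g y)) l (ninf n (vsub (Fmap n g x) (Fmap n g y))) p).
  replace (S (pred n)) with n in hbound by lia.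
  rewrite hmax. unfold Rdiv.
  rewrite (Rmult_comm (3 * INR n - 4)), Rmult_assoc.
  apply (Rmult_le_reg_l (2 * l * (INR n - 1) * (INR n - 2))); [exact hden|].
  rewrite <- Rmult_assoc, Rinv_r, Rmult_1_l by lra.
  replace (2 * l * (INR n - 1) * (INR n - 2) * Rabs (vsub x y p))
    with (2 * (INR n - 1) * (INR n - 2) * (l * Rabs (vsub x y p))) by ring.
  apply hbound; try lia; try exact hl.
  - intros i j hi hj. apply secant_matrix_sym; lia.
  - intros i j hi hj hij. apply secant_matrix_off; auto; lia.
  - intros i hi. apply secant_matrix_diag; auto; lia.
  - intros i hi. apply Fmap_difference. lia.
  - intros i hi. apply ninf_ge. lia.
  - intros j hj. rewrite <- hmax. apply ninf_ge. lia.
Qed.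

Hypothesis hUsub : subset_Rn n U.

(* Injectivity: F x = F y makes the right-hand side of the Lipschitz
   estimate vanish, and coordinates beyond n vanish for points of U. *)
Lemma Fmap_injective (x y : nat -> R) : U x -> U y -> Fmap n g x = Fmap n g y -> x = y.
Proof.
  intros Ux Uy hF.
  pose proof (lipschitz_bound x y Ux Uy) as hb.
  rewrite (ninf_zero n (vsub (Fmap n g x) (Fmap n g y))), Rmult_0_r in hb
    by (intros i _; unfold vsub; rewrite hF; ring).
  apply functional_extensionality. intros i.
  destruct (Nat.lt_ge_cases i n) as [hi|hi].
  - pose proof (ninf_ge n (vsub x y) i hi) as h.
    pose proof (Rabs_pos (vsub x y i)).
    assert (hzero : Rabs (vsub x y i) = 0) by lra.
    apply Rminus_diag_uniq. change (vsub x y i = 0).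
    destruct (Req_dec (vsub x y i) 0) as [e|ne]; [exact e|].
    exfalso. exact (Rabs_no_R0 _ ne hzero).
  - rewrite (hUsub x Ux i hi), (hUsub y Uy i hi). reflexivity.
Qed.
End Setting.

Theorem theorem2p2
  (n : nat) (U : (nat -> R) -> Prop)
  (g g' : nat -> nat -> R -> R) (l : R)
  (hn : (3 <= n)%nat)
  (hUsub : subset_Rn n U) (hUconv : convex_set U) (hUopen : open_in_Rn n U)
  (hgder : forall i j, (i < n)%nat -> (j < n)%nat ->
             forall t, derivable_pt_lim (g i j) t (g' i j t))
  (hgcont : forall i j, (i < n)%nat -> (j < n)%nat -> continuity (g' i j))
  (hgsym : forall i j, (i < n)%nat -> (j < n)%nat -> g i j = g j i)
  (hl : 0 < l)
  (hoff : forall x, U x -> forall i j, (i < n)%nat -> (j < n)%nat -> i <> j ->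
             l <= g' i j (x i + x j))
  (hdiag : forall x, U x -> forall i, (i < n)%nat -> 0 <= g' i i (2 * x i)) :
  (forall x y, U x -> U y -> Fmap n g x = Fmap n g y -> x = y) /\
  (forall x y, U x -> U y ->
     ninf n (vsub x y) <=
     (3 * INR n - 4) / (2 * l * (INR n - 1) * (INR n - 2)) *
     ninf n (vsub (Fmap n g x) (Fmap n g y))).
Proof.
  split.
  - exact (Fmap_injective n U g g' l hn hUconv hgder hgsym hl hoff hdiag hUsub).
  - exact (lipschitz_bound n U g g' l hn hUconv hgder hgsym hl hoff hdiag).
Qed.
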